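(* Let $f$ be a nonconstant harmonic function on $K$. Then the derivative of the restriction of $f$ to $[p_1,p_2]$ exists and is infinite ($+\infty$ or $-\infty$) at all junction points of $[p_1,p_2]$ with at most one exception (one-sided derivatives at the endpoints $p_1,p_2$). Moreover, on the whole contour $[p_0,p_1]\cup[p_0,p_2]\cup[p_1,p_2]$ of $G_0$ there is at most one junction point $x$ for which it fails that, for every edge $E$ of $G_0$ containing $x$, the derivative of $f|_E$ at $x$ (one-sided if $x$ is an endpoint of $E$) exists and is infinite; in particular the derivative of a restriction can vanish at no more than one junction point of the contour.
   Context: Let $p_0,p_1,p_2$ be the vertices of a unit equilateral triangle in $\mathbb{R}^2$, $F_i(x)=(x+p_i)/2$, and $K$ the Sierpinski gasket (the attractor of $F_0,F_1,F_2$). For words $w$ of length $m$, $F_w$ is the composition $F_{w_1}\circ\cdots\circ F_{w_m}$; the minimal triangles of the graph $G_m$ are the triangles with vertices $F_w(p_0),F_w(p_1),F_w(p_2)$, and $V_m$ is the set of all these vertices. Junction points are the points of $\bigcup_m V_m$; on an edge $[p_i,p_j]$ parametrized by $t\mapsto p_i+t(p_j-p_i)$, $t\in[0,1]$, these are exactly the points with dyadic rational $t$. A continuous $f:K\to\mathbb{R}$ is harmonic if for every $m\ge0$ and every minimal triangle of $G_m$ with vertices $v_i,v_j,v_k$, the value at the midpoint $v_{ij}$ of $[v_i,v_j]$ is $\frac15(2f(v_i)+2f(v_j)+f(v_k))$. Restrictions to edges are viewed as functions of the linear parameter $t\in[0,1]$. *)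

From Stdlib Require Import Reals Lra List.
Open Scope R_scope.

Definition pt : Type := (R * R)%type.

Definition dist (x y : pt) : R :=
  sqrt ((fst x - fst y) ^ 2 + (snd x - snd y) ^ 2).

(* The three vertices are given as p : nat -> pt; only p 0, p 1, p 2 matter. *)
Definition unit_equilateral (p : nat -> pt) : Prop :=
  dist (p 0%nat) (p 1%nat) = 1 /\ dist (p 0%nat) (p 2%nat) = 1 /\
  dist (p 1%nat) (p 2%nat) = 1.

Definition Fmap (p : nat -> pt) (i : nat) (x : pt) : pt :=
  ((fst x + fst (p i)) / 2, (snd x + snd (p i)) / 2).

Definition word (w : list nat) : Prop := Forall (fun i => (i < 3)%nat) w.

Definition Fw (p : nat -> pt) (w : list nat) (x : pt) : pt :=
  fold_right (fun i y => Fmap p i y) x w.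

Definition in_triangle (p : nat -> pt) (x : pt) : Prop :=
  exists a b c, 0 <= a /\ 0 <= b /\ 0 <= c /\ a + b + c = 1 /\
    x = (a * fst (p 0%nat) + b * fst (p 1%nat) + c * fst (p 2%nat),
         a * snd (p 0%nat) + b * snd (p 1%nat) + c * snd (p 2%nat)).

(* The Sierpinski gasket = attractor of F_0,F_1,F_2, realized as
   the intersection over m of the union over |w| = m of F_w(triangle). *)
Definition K (p : nat -> pt) (x : pt) : Prop :=
  forall m : nat, exists w y, word w /\ length w = m /\ in_triangle p y /\
    x = Fw p w y.

Definition V (p : nat -> pt) (m : nat) (x : pt) : Prop :=
  exists w i, word w /\ length w = m /\ (i < 3)%nat /\ x = Fw p w (p i).

Definition junction (p : nat -> pt) (x : pt) : Prop := exists m, V p m x.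

Definition midpoint (x y : pt) : pt :=
  ((fst x + fst y) / 2, (snd x + snd y) / 2).

Definition continuous_on_K (p : nat -> pt) (f : pt -> R) : Prop :=
  forall x, K p x -> forall eps, 0 < eps -> exists delta, 0 < delta /\
    forall y, K p y -> dist x y < delta -> Rabs (f y - f x) < eps.

Definition harmonic (p : nat -> pt) (f : pt -> R) : Prop :=
  continuous_on_K p f /\
  forall w i j k, word w -> (i < 3)%nat -> (j < 3)%nat -> (k < 3)%nat ->
    i <> j -> i <> k -> j <> k ->
    f (midpoint (Fw p w (p i)) (Fw p w (p j))) =
      (2 * f (Fw p w (p i)) + 2 * f (Fw p w (p j)) + f (Fw p w (p k))) / 5.

Definition edge (p : nat -> pt) (i j : nat) (t : R) : pt :=
  (fst (p i) + t * (fst (p j) - fst (p i)),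
   snd (p i) + t * (snd (p j) - snd (p i))).

(* the derivative of g : [0,1] -> R at t exists and equals +oo or -oo
   (one-sided at the endpoints 0, 1, since s ranges over [0,1]) *)
Definition infinite_deriv (g : R -> R) (t : R) : Prop :=
  (forall M, exists d, 0 < d /\ forall s, 0 <= s <= 1 -> 0 < Rabs (s - t) < d ->
      (g s - g t) / (s - t) > M) \/
  (forall M, exists d, 0 < d /\ forall s, 0 <= s <= 1 -> 0 < Rabs (s - t) < d ->
      (g s - g t) / (s - t) < M).

Definition zero_deriv (g : R -> R) (t : R) : Prop :=
  forall eps, 0 < eps -> exists d, 0 < d /\ forall s, 0 <= s <= 1 ->
      0 < Rabs (s - t) < d -> Rabs ((g s - g t) / (s - t)) < eps.

Definition on_contour (p : nat -> pt) (x : pt) : Prop :=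
  exists i j t, (i < 3)%nat /\ (j < 3)%nat /\ i <> j /\ 0 <= t <= 1 /\ x = edge p i j t.

Definition good_point (p : nat -> pt) (f : pt -> R) (x : pt) : Prop :=
  forall i j t, (i < 3)%nat -> (j < 3)%nat -> i <> j -> 0 <= t <= 1 ->
    x = edge p i j t -> infinite_deriv (fun s => f (edge p i j s)) t.

Definition vanishing_point (p : nat -> pt) (f : pt -> R) (x : pt) : Prop :=
  exists i j t, (i < 3)%nat /\ (j < 3)%nat /\ i <> j /\ 0 <= t <= 1 /\
    x = edge p i j t /\ zero_deriv (fun s => f (edge p i j s)) t.

(* Along an edge [p_i, p_j], the cells of G_m that meet it are coded by binary
   words u.  For a harmonic f, the Laplacian-type quantities (x, y) of a cell at
   the two ends of its side evolve linearly under subdivision,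
   (x, y) |-> (3x/5, (x+y)/5) or ((x+y)/5, 3y/5).  Zooming into the left end of a
   cell multiplies x by 3/5 while lengths halve, so by the minimum principle the
   difference quotients there grow like (6/5)^n x: the one-sided derivative is
   infinite with the sign of x.  At the midpoint of a cell both one-sided slopes
   come from the same number (x+y)/5, so the derivative along the edge can fail
   to be infinite only at a vertex with vanishing Laplacian, or at a dyadic point
   whose orbit starting from the Laplacians at the ends of the edge reaches the
   line x + y = 0.  The cone xy >= 0, x + y <> 0 is invariant and the two maps
   leave its complement through disjoint sets, so for nonconstant f there is
   at most one such word on the whole contour, and at most one such vertex,
   never both. *)

From Pilot Require Import Defs.
From Stdlib Require Import Reals List Lra Lia Psatz Classical.
Import ListNotations.
Open Scope R_scope.

Definition bit (b : bool) : R := if b then 1 else 0.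

Fixpoint dpos (u : list bool) : R :=
  match u with nil => 0 | b :: u' => (dpos u' + bit b) / 2 end.

Definition dlen (u : list bool) : R := (/2) ^ length u.

Definition dmid (u : list bool) : R := dpos u + dlen u / 2.

Lemma dlen_nil : dlen [] = 1.
Proof. reflexivity. Qed.

Lemma dlen_cons b u : dlen (b :: u) = dlen u / 2.
Proof. unfold dlen; simpl; field. Qed.

Lemma dlen_snoc u b : dlen (u ++ [b]) = dlen u / 2.
Proof. unfold dlen; rewrite length_app, pow_add; simpl; field. Qed.

Lemma dlen_app u v : dlen (u ++ v) = dlen u * (/2) ^ length v.
Proof. unfold dlen; rewrite length_app, pow_add; reflexivity. Qed.

Lemma dlen_pos u : 0 < dlen u.
Proof. unfold dlen; apply pow_lt; lra. Qed.

Lemma dpos_snoc u b : dpos (u ++ [b]) = dpos u + dlen u * bit b / 2.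
Proof.
  induction u as [|c u IH]; simpl.
  - rewrite dlen_nil; destruct b; simpl; field.
  - rewrite IH, dlen_cons; field.
Qed.

Lemma dpos_bounds u : 0 <= dpos u /\ dpos u + dlen u <= 1.
Proof.
  induction u as [|c u IH]; simpl.
  - rewrite dlen_nil; lra.
  - rewrite dlen_cons; pose proof (dlen_pos u); destruct c; simpl; lra.
Qed.

Lemma dlen_flip u : dlen (map negb u) = dlen u.
Proof. unfold dlen; rewrite length_map; reflexivity. Qed.

Lemma dpos_flip u : dpos (map negb u) = 1 - dpos u - dlen u.
Proof.
  induction u as [|c u IH]; simpl.
  - rewrite dlen_nil; lra.
  - rewrite IH, dlen_cons; destruct c; simpl; field.
Qed.

Lemma dmid_flip u : dmid (map negb u) = 1 - dmid u.
Proof. unfold dmid; rewrite dpos_flip, dlen_flip; field. Qed.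

Lemma dpos_dyadic u : dpos u = 0 \/ exists v, dpos u = dmid v.
Proof.
  induction u as [|b u IH] using rev_ind; [now left|].
  rewrite dpos_snoc; destruct b; simpl.
  - right; exists u; unfold dmid; field.
  - now rewrite Rmult_0_r, Rdiv_0_l, Rplus_0_r.
Qed.

Lemma dend_dyadic u : dpos u + dlen u = 1 \/ exists v, dpos u + dlen u = dmid v.
Proof.
  induction u as [|b u IH] using rev_ind; [left; simpl; rewrite dlen_nil; lra|].
  rewrite dpos_snoc, dlen_snoc; destruct b; simpl.
  - now replace (dpos u + dlen u * 1 / 2 + dlen u / 2) with (dpos u + dlen u) by field.
  - right; exists u; unfold dmid; field.
Qed.

Lemma cell_refine u n s : dpos u <= s <= dpos u + dlen u ->
  exists v, length v = n /\ dpos (u ++ v) <= s <= dpos (u ++ v) + dlen (u ++ v).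
Proof.
  intros Hs; induction n as [|n [v [Hl Hv]]].
  - exists []; now rewrite app_nil_r.
  - destruct (Rle_dec s (dpos (u ++ v) + dlen (u ++ v) / 2)) as [Hle|Hgt];
      [exists (v ++ [false]) | exists (v ++ [true])];
      (rewrite length_app, Hl, Nat.add_comm; split; [reflexivity|]);
      rewrite app_assoc, dpos_snoc, dlen_snoc; simpl; lra.
Qed.

Lemma small_pow d : 0 < d -> exists n, (/2) ^ n < d.
Proof.
  intros Hd.
  destruct (pow_lt_1_zero (/2)) with d as [N HN]; [rewrite Rabs_pos_eq; lra | exact Hd |].
  exists N; specialize (HN N (le_n N)).
  rewrite Rabs_pos_eq in HN; auto; apply pow_le; lra.
Qed.

Lemma pow_le_one x n : 0 <= x <= 1 -> x ^ n <= 1.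
Proof. intros Hx; rewrite <- (pow1 n); apply pow_incr; lra. Qed.

Lemma dyadic_scale N u : 0 < u -> u <= (/2) ^ N ->
  exists n, (N <= n)%nat /\ (/2) ^ S n <= u <= (/2) ^ n.
Proof.
  intros Hu HuN; destruct (small_pow u Hu) as [m Hm].
  assert (Hm' : (/2) ^ (N + m) < u).
  { rewrite pow_add; pose proof (pow_le_one (/2) N ltac:(lra)).
    pose proof (pow_lt (/2) m ltac:(lra)); nra. }
  clear Hm; revert N HuN Hm'; induction m as [|m IH]; intros N HuN Hm.
  - rewrite Nat.add_0_r in Hm; lra.
  - destruct (Rle_dec ((/2) ^ S N) u) as [Hle|Hgt]; [exists N; split; [lia | lra]|].
    destruct (IH (S N)) as [n [HNn Hn]]; [lra | now rewrite <- plus_n_Sm in Hm|].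
    exists n; split; [lia | exact Hn].
Qed.

Definition step (b : bool) (q : R * R) : R * R :=
  if b then ((fst q + snd q) / 5, 3 * snd q / 5)
  else (3 * fst q / 5, (fst q + snd q) / 5).

Definition orbit (q : R * R) (u : list bool) : R * R := fold_left (fun q b => step b q) u q.

Definition orbit_sum (q : R * R) (u : list bool) : R := fst (orbit q u) + snd (orbit q u).

Definition in_cone (q : R * R) : Prop := 0 <= fst q * snd q /\ fst q + snd q <> 0.

Lemma orbit_snoc q u b : orbit q (u ++ [b]) = step b (orbit q u).
Proof. unfold orbit; now rewrite fold_left_app. Qed.

Lemma step_in_cone b q : in_cone q -> in_cone (step b q).
Proof.
  destruct q as [x y]; unfold in_cone; destruct b; simpl; intros [Hxy Hs]; split; nra.
Qed.

Lemma orbit_in_cone u : forall q, in_cone q -> in_cone (orbit q u).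
Proof. induction u as [|b u IH]; intros q Hq; simpl; auto using step_in_cone. Qed.

Lemma orbit_sum_eq0_not_in_cone q u : orbit_sum q u = 0 -> ~ in_cone q.
Proof. intros Hz Hq; now apply (orbit_in_cone u q Hq). Qed.

Lemma in_cone_swap_opp x y : in_cone (x, y) <-> in_cone (- y, - x).
Proof. unfold in_cone; simpl; split; intros [H1 H2]; split; (nra || lra). Qed.

Lemma step_neq0 b q : q <> (0, 0) -> step b q <> (0, 0).
Proof.
  destruct q as [x y]; intros Hq Hs; apply Hq.
  destruct b; injection Hs as H1 H2; f_equal; lra.
Qed.

Lemma step_in_cone_of_sum0 b q : q <> (0, 0) -> fst q + snd q = 0 -> in_cone (step b q).
Proof.
  destruct q as [x y]; simpl; intros Hq Hs.
  assert (Hx : x <> 0) by (intro; apply Hq; f_equal; lra).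
  unfold in_cone; destruct b; simpl; split; (nra || lra).
Qed.

Lemma step_exit_cone_unique b b' q : q <> (0, 0) ->
  ~ in_cone (step b q) -> ~ in_cone (step b' q) -> b = b'.
Proof.
  destruct q as [x y]; intros Hq Hb Hb'.
  destruct b, b'; auto; exfalso; unfold in_cone in *; simpl in *;
    apply not_and_or in Hb, Hb'; destruct Hb, Hb'; try nra;
    apply Hq; f_equal; nra.
Qed.

Lemma orbit_sum_eq0_unique u : forall q v, q <> (0, 0) ->
  orbit_sum q u = 0 -> orbit_sum q v = 0 -> u = v.
Proof.
  unfold orbit_sum; induction u as [|b u IH]; intros q [|c v] Hq Hu Hv; simpl in Hu, Hv; auto.
  - exfalso; apply (orbit_sum_eq0_not_in_cone _ _ Hv), step_in_cone_of_sum0; auto.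
  - exfalso; apply (orbit_sum_eq0_not_in_cone _ _ Hu), step_in_cone_of_sum0; auto.
  - assert (Hcb : c = b).
    { apply (step_exit_cone_unique c b q Hq); eapply orbit_sum_eq0_not_in_cone; eauto. }
    subst c; f_equal; apply (IH (step b q)); auto using step_neq0.
Qed.

Lemma orbit_flip u : forall x y,
  orbit (- y, - x) (map negb u) = (- snd (orbit (x, y) u), - fst (orbit (x, y) u)).
Proof.
  induction u as [|c u IH]; intros x y; simpl; [reflexivity|].
  destruct c; simpl; rewrite <- IH; f_equal; f_equal; field.
Qed.

Lemma orbit_sum_flip u x y : orbit_sum (- y, - x) (map negb u) = - orbit_sum (x, y) u.
Proof. unfold orbit_sum; rewrite orbit_flip; simpl; ring. Qed.

Definition edge_word (i j : nat) (u : list bool) : list nat :=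
  map (fun b : bool => if b then j else i) u.

Lemma word_edge_word i j u : (i < 3)%nat -> (j < 3)%nat -> word (edge_word i j u).
Proof.
  intros Hi Hj; apply Forall_map, Forall_forall; intros [] _; auto.
Qed.

Lemma edge_word_flip i j u : edge_word j i (map negb u) = edge_word i j u.
Proof. unfold edge_word; rewrite map_map; apply map_ext; now intros []. Qed.

Lemma Fw_app p w w' x : Fw p (w ++ w') x = Fw p w (Fw p w' x).
Proof. apply fold_right_app. Qed.

Lemma Fw_midpoint p w x y : Fw p w (midpoint x y) = midpoint (Fw p w x) (Fw p w y).
Proof.
  induction w as [|l w IH]; [reflexivity|]; simpl; fold (Fw p w).
  rewrite IH; unfold Fmap, midpoint; f_equal; simpl; field.
Qed.

Lemma Fmap_fix p m : Fmap p m (p m) = p m.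
Proof. unfold Fmap; apply injective_projections; simpl; field. Qed.

Lemma edge0 p i j : edge p i j 0 = p i.
Proof. unfold edge; apply injective_projections; simpl; ring. Qed.

Lemma edge1 p i j : edge p i j 1 = p j.
Proof. unfold edge; apply injective_projections; simpl; ring. Qed.

Lemma edge_rev p i j s : edge p j i (1 - s) = edge p i j s.
Proof. unfold edge; f_equal; simpl; ring. Qed.

Lemma Fw_edge p i j u s :
  Fw p (edge_word i j u) (edge p i j s) = edge p i j (dpos u + dlen u * s).
Proof.
  induction u as [|b u IH]; simpl.
  - rewrite dlen_nil; f_equal; ring.
  - fold (Fw p (edge_word i j u)); rewrite IH, dlen_cons.
    unfold Fmap, edge; destruct b; f_equal; simpl; field.
Qed.

Lemma Fw_edge_vertex_l p i j u : Fw p (edge_word i j u) (p i) = edge p i j (dpos u).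
Proof. now rewrite <- (edge0 p i j), Fw_edge, Rmult_0_r, Rplus_0_r. Qed.

Lemma Fw_edge_vertex_r p i j u : Fw p (edge_word i j u) (p j) = edge p i j (dpos u + dlen u).
Proof. now rewrite <- (edge1 p i j), Fw_edge, Rmult_1_r. Qed.

Lemma sq_dist_vertices p i j : unit_equilateral p -> (i < 3)%nat -> (j < 3)%nat -> i <> j ->
  (fst (p i) - fst (p j)) ^ 2 + (snd (p i) - snd (p j)) ^ 2 = 1.
Proof.
  intros [H01 [H02 H12]] Hi Hj Hij; unfold Defs.dist in *.
  assert (Hsq : forall a, 0 <= a -> sqrt a = 1 -> a = 1)
    by (intros a Ha H1; now rewrite <- (sqrt_sqrt a Ha), H1, Rmult_1_r).
  apply Hsq in H01, H02, H12; try (apply Rplus_le_le_0_compat; apply pow2_ge_0).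
  destruct i as [|[|[|i]]]; destruct j as [|[|[|j]]]; try lia; nra.
Qed.

Lemma dist_edge p i j s s' : unit_equilateral p -> (i < 3)%nat -> (j < 3)%nat -> i <> j ->
  Defs.dist (edge p i j s) (edge p i j s') = Rabs (s - s').
Proof.
  intros U Hi Hj Hij; pose proof (sq_dist_vertices p i j U Hi Hj Hij) as D.
  unfold Defs.dist, edge; simpl; rewrite <- sqrt_Rsqr_abs; f_equal; unfold Rsqr.
  transitivity ((s - s') ^ 2 * ((fst (p i) - fst (p j)) ^ 2 + (snd (p i) - snd (p j)) ^ 2));
    [ring | rewrite D; ring].
Qed.

Lemma edge_inj p i j t t' : unit_equilateral p -> (i < 3)%nat -> (j < 3)%nat -> i <> j ->
  edge p i j t = edge p i j t' -> t = t'.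
Proof.
  intros U Hi Hj Hij He.
  pose proof (dist_edge p i j t t' U Hi Hj Hij) as D; rewrite He in D.
  unfold Defs.dist in D; rewrite !Rminus_diag in D; simpl in D.
  rewrite Rmult_0_l, Rplus_0_l, sqrt_0 in D.
  destruct (Req_dec (t - t') 0) as [Z|Z]; [lra | exfalso; now apply (Rabs_no_R0 _ Z)].
Qed.

Lemma in_triangle_edge p i j u : (i < 3)%nat -> (j < 3)%nat -> i <> j -> 0 <= u <= 1 ->
  in_triangle p (edge p i j u).
Proof.
  intros Hi Hj Hij Hu.
  pose (c l := if Nat.eqb l i then 1 - u else if Nat.eqb l j then u else 0).
  exists (c 0%nat), (c 1%nat), (c 2%nat); unfold c.
  destruct i as [|[|[|i]]]; destruct j as [|[|[|j]]]; try lia; simpl;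
    (repeat split; try lra); unfold edge; f_equal; simpl; ring.
Qed.

Lemma in_triangle_vertex p m : (m < 3)%nat -> in_triangle p (p m).
Proof.
  intros Hm; destruct m as [|[|[|m]]]; try lia;
    [exists 1, 0, 0 | exists 0, 1, 0 | exists 0, 0, 1];
    (repeat split; try lra); apply injective_projections; simpl; ring.
Qed.

Lemma in_triangle_Fmap p l y : (l < 3)%nat -> in_triangle p y -> in_triangle p (Fmap p l y).
Proof.
  intros Hl [a [b [c [Ha [Hb [Hc [Hs ->]]]]]]].
  destruct l as [|[|[|l]]]; try lia;
    [exists ((a + 1) / 2), (b / 2), (c / 2) | exists (a / 2), ((b + 1) / 2), (c / 2)
    | exists (a / 2), (b / 2), ((c + 1) / 2)];
    (repeat split; try lra); unfold Fmap; f_equal; simpl; field.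
Qed.

Lemma in_triangle_Fw p w y : word w -> in_triangle p y -> in_triangle p (Fw p w y).
Proof.
  induction w as [|l w IH]; intros Hw Hy; simpl; auto.
  inversion Hw; subst; apply in_triangle_Fmap; auto.
Qed.

Lemma Fw_repeat_fix p m n : Fw p (repeat m n) (p m) = p m.
Proof.
  induction n as [|n IH]; simpl; auto.
  fold (Fw p (repeat m n)); now rewrite IH, Fmap_fix.
Qed.

Lemma K_Fw_vertex p w m : word w -> (m < 3)%nat -> K p (Fw p w (p m)).
Proof.
  intros Hw Hm n; destruct (Compare_dec.le_lt_dec n (length w)) as [Hn|Hn].
  - rewrite <- (firstn_skipn n w) in Hw; apply Forall_app in Hw as [Hw1 Hw2].
    exists (firstn n w), (Fw p (skipn n w) (p m)); repeat split; auto.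
    + rewrite length_firstn; lia.
    + apply in_triangle_Fw, in_triangle_vertex; auto.
    + now rewrite <- Fw_app, firstn_skipn.
  - exists (w ++ repeat m (n - length w)), (p m); repeat split.
    + apply Forall_app; split; auto.
      apply Forall_forall; intros x Hx; apply repeat_spec in Hx; lia.
    + rewrite length_app, repeat_length; lia.
    + now apply in_triangle_vertex.
    + now rewrite Fw_app, Fw_repeat_fix.
Qed.

Lemma K_edge p i j s : (i < 3)%nat -> (j < 3)%nat -> i <> j -> 0 <= s <= 1 -> K p (edge p i j s).
Proof.
  intros Hi Hj Hij Hs m.
  destruct (cell_refine [] m s) as [v [Hl Hv]]; [simpl; rewrite dlen_nil; lra|].
  simpl in Hv; pose proof (dlen_pos v).
  exists (edge_word i j v), (edge p i j ((s - dpos v) / dlen v)); repeat split.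
  - now apply word_edge_word.
  - unfold edge_word; now rewrite length_map.
  - apply in_triangle_edge; auto; split.
    + apply Rmult_le_pos; [lra | left; apply Rinv_0_lt_compat; lra].
    + apply Rmult_le_reg_r with (dlen v); [lra|].
      unfold Rdiv; rewrite Rmult_assoc, Rinv_l; lra.
  - rewrite Fw_edge; f_equal; field; lra.
Qed.

Definition distinct3 (i j k : nat) : Prop :=
  (i < 3 /\ j < 3 /\ k < 3 /\ i <> j /\ i <> k /\ j <> k)%nat.

Definition harmonic_rule (p : nat -> pt) (f : pt -> R) : Prop :=
  forall w i j k, word w -> (i < 3)%nat -> (j < 3)%nat -> (k < 3)%nat ->
    i <> j -> i <> k -> j <> k ->
    f (midpoint (Fw p w (p i)) (Fw p w (p j))) =
      (2 * f (Fw p w (p i)) + 2 * f (Fw p w (p j)) + f (Fw p w (p k))) / 5.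

(* The word u codes the cell of G_m spanned by F_w(p_0), F_w(p_1), F_w(p_2),
   w = edge_word i j u, whose side on [p_i, p_j] is [dpos u, dpos u + dlen u]
   in the parameter of the edge. *)
Definition cell_value (p : nat -> pt) (f : pt -> R) (i j : nat) (u : list bool) (m : nat) : R :=
  f (Fw p (edge_word i j u) (p m)).

(* The sign of cell_dl u (resp. cell_dr u) is the sign of the infinite slope of f
   along the edge at the left (resp. right) end of the side of the cell. *)
Definition cell_dl (p : nat -> pt) (f : pt -> R) (i j k : nat) (u : list bool) : R :=
  (cell_value p f i j u j + cell_value p f i j u k) / 2 - cell_value p f i j u i.

Definition cell_dr (p : nat -> pt) (f : pt -> R) (i j k : nat) (u : list bool) : R :=
  cell_value p f i j u j - (cell_value p f i j u i + cell_value p f i j u k) / 2.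

Lemma cell_value_l p f i j u : cell_value p f i j u i = f (edge p i j (dpos u)).
Proof. unfold cell_value; now rewrite Fw_edge_vertex_l. Qed.

Lemma distinct3_swap i j k : distinct3 i j k -> distinct3 j i k.
Proof. unfold distinct3; lia. Qed.

Section CellValues.
Variables (p : nat -> pt) (f : pt -> R) (i j k : nat).
Hypothesis T : distinct3 i j k.
Hypothesis H : harmonic_rule p f.

Let vertex (b : bool) : nat := if b then j else i.

Lemma cell_value_snoc_fixed u b :
  cell_value p f i j (u ++ [b]) (vertex b) = cell_value p f i j u (vertex b).
Proof.
  unfold cell_value, edge_word; rewrite map_app, Fw_app; simpl.
  now rewrite Fmap_fix.
Qed.

Lemma cell_value_snoc u b m o : (m < 3)%nat -> (o < 3)%nat -> m <> vertex b -> m <> o ->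
  vertex b <> o ->
  cell_value p f i j (u ++ [b]) m =
    (2 * cell_value p f i j u m + 2 * cell_value p f i j u (vertex b) + cell_value p f i j u o) / 5.
Proof.
  intros Hm Ho Hml Hmo Hlo; unfold cell_value, edge_word; rewrite map_app, Fw_app; simpl.
  change (Fmap p _ (p m)) with (midpoint (p m) (p (vertex b))); rewrite Fw_midpoint.
  destruct T as [Hi [Hj _]]; apply H; auto.
  - now apply word_edge_word.
  - unfold vertex; now destruct b.
Qed.

Lemma cell_d_snoc u b :
  (cell_dl p f i j k (u ++ [b]), cell_dr p f i j k (u ++ [b])) =
    step b (cell_dl p f i j k u, cell_dr p f i j k u).
Proof.
  pose proof T as (Hi & Hj & Hk & Hij & Hik & Hjk).
  unfold cell_dl, cell_dr; destruct b; simpl.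
  - pose proof (cell_value_snoc_fixed u true) as Ej; simpl in Ej.
    rewrite Ej, (cell_value_snoc u true i k), (cell_value_snoc u true k i); simpl; auto.
    f_equal; field.
  - pose proof (cell_value_snoc_fixed u false) as Ei; simpl in Ei.
    rewrite Ei, (cell_value_snoc u false j k), (cell_value_snoc u false k j); simpl; auto.
    f_equal; field.
Qed.

Lemma cell_d_app u v :
  (cell_dl p f i j k (u ++ v), cell_dr p f i j k (u ++ v)) =
    orbit (cell_dl p f i j k u, cell_dr p f i j k u) v.
Proof.
  induction v as [|b v IH] using rev_ind; [now rewrite app_nil_r|].
  now rewrite app_assoc, cell_d_snoc, IH, orbit_snoc.
Qed.

Lemma cell_values_lower lo u v : lo <= cell_value p f i j u i -> lo <= cell_value p f i j u j ->
  lo <= cell_value p f i j u k ->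
  lo <= cell_value p f i j (u ++ v) i /\ lo <= cell_value p f i j (u ++ v) j /\
  lo <= cell_value p f i j (u ++ v) k.
Proof.
  pose proof T as (Hi & Hj & Hk & Hij & Hik & Hjk).
  intros Hli Hlj Hlk; induction v as [|b v IH] using rev_ind; [now rewrite app_nil_r|].
  rewrite app_assoc; destruct b;
    [ pose proof (cell_value_snoc_fixed (u ++ v) true) as Ef;
      rewrite (cell_value_snoc _ true i k), (cell_value_snoc _ true k i)
    | pose proof (cell_value_snoc_fixed (u ++ v) false) as Ef;
      rewrite (cell_value_snoc _ false j k), (cell_value_snoc _ false k j) ];
    simpl in *; auto; rewrite ?Ef; lra.
Qed.

End CellValues.

Lemma cell_lower_bound p f i j k lo u : unit_equilateral p -> continuous_on_K p f ->
  harmonic_rule p f -> distinct3 i j k ->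
  lo <= cell_value p f i j u i -> lo <= cell_value p f i j u j -> lo <= cell_value p f i j u k ->
  forall s, dpos u <= s <= dpos u + dlen u -> lo <= f (edge p i j s).
Proof.
  intros U Hc H T Hli Hlj Hlk s Hs.
  destruct (Rle_dec lo (f (edge p i j s))) as [Hle|Hgt]; [exact Hle | exfalso].
  pose proof T as (Hi & Hj & Hk & Hij & _).
  pose proof (dpos_bounds u); pose proof (dlen_pos u).
  assert (Hs01 : 0 <= s <= 1) by lra.
  destruct (Hc _ (K_edge p i j s Hi Hj Hij Hs01) (lo - f (edge p i j s))) as [d [Hd Hcd]];
    [lra|].
  destruct (small_pow (d / dlen u)) as [n Hn]; [apply Rdiv_lt_0_compat; lra|].
  destruct (cell_refine u n s Hs) as [v [Hl Hv]].
  assert (Hsmall : dlen (u ++ v) < d).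
  { rewrite dlen_app, Hl.
    apply Rmult_lt_reg_r with (/ dlen u); [apply Rinv_0_lt_compat; lra|].
    replace (dlen u * (/2) ^ n * / dlen u) with ((/2) ^ n) by (field; lra); exact Hn. }
  destruct (cell_values_lower p f i j k T H lo u v Hli Hlj Hlk) as [Hlo _].
  rewrite cell_value_l in Hlo.
  pose proof (dpos_bounds (u ++ v)); pose proof (dlen_pos (u ++ v)).
  specialize (Hcd (edge p i j (dpos (u ++ v))) (K_edge p i j (dpos (u ++ v)) Hi Hj Hij ltac:(lra))).
  rewrite dist_edge in Hcd; auto.
  specialize (Hcd ltac:(apply Rabs_def1; lra)); apply Rabs_def2 in Hcd; lra.
Qed.

Lemma orbit_repeat_false n : forall x y, orbit (x, y) (repeat false n) =
  ((3/5) ^ n * x, (1/5) ^ n * (y - x / 2) + (3/5) ^ n * x / 2).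
Proof.
  induction n as [|n IH]; intros x y; simpl; [f_equal; field|].
  rewrite IH; f_equal; field.
Qed.

Lemma dpos_pad u n : dpos (u ++ repeat false n) = dpos u.
Proof.
  induction n as [|n IH]; [now rewrite app_nil_r|].
  change (repeat false (S n)) with (false :: repeat false n).
  rewrite repeat_cons, app_assoc, dpos_snoc, IH; simpl; field.
Qed.

Lemma dlen_pad u n : dlen (u ++ repeat false n) = dlen u * (/2) ^ n.
Proof. now rewrite dlen_app, repeat_length. Qed.

Lemma growth_dominates x0 c R0 : 0 < x0 -> 0 <= c ->
  exists N, forall n, (N <= n)%nat -> R0 < 9 * (6/5) ^ n * x0 - 10 * (2/5) ^ n * c.
Proof.
  intros Hx Hc; destruct (INR_archimed (9 * x0 / 5) (R0 + 10 * c)) as [N HN]; [lra|].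
  exists N; intros n Hn.
  pose proof (poly n (1/5) ltac:(lra)) as Hb; replace (1 + 1/5) with (6/5) in Hb by field.
  pose proof (pow_le_one (2/5) n ltac:(lra)); pose proof (le_INR N n Hn); nra.
Qed.

Definition beyond (up : bool) (r M : R) : Prop := if up then r > M else r < M.

Definition right_inf (g : R -> R) (t : R) (up : bool) : Prop :=
  forall M, exists d, 0 < d /\ forall s, 0 <= s <= 1 -> 0 < s - t < d ->
    beyond up ((g s - g t) / (s - t)) M.

Definition left_inf (g : R -> R) (t : R) (up : bool) : Prop :=
  forall M, exists d, 0 < d /\ forall s, 0 <= s <= 1 -> 0 < t - s < d ->
    beyond up ((g s - g t) / (s - t)) M.

Section RightSlope.
Variables (p : nat -> pt) (f : pt -> R) (i j k : nat).
Hypothesis U : unit_equilateral p.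
Hypothesis Hc : continuous_on_K p f.
Hypothesis H : harmonic_rule p f.
Hypothesis T : distinct3 i j k.

Let dl := cell_dl p f i j k.
Let dr := cell_dr p f i j k.

(* On the right half of a cell the three vertex values, hence (minimum principle)
   f itself, exceed the value at the left end by 3/5 dl + O(dr - dl/2). *)
Lemma cell_right_half_lower w : 0 <= dl w ->
  forall s, dpos w + dlen w / 2 <= s <= dpos w + dlen w ->
  f (edge p i j (dpos w)) + (9 * dl w - 10 * Rabs (dr w - dl w / 2)) / 15 <= f (edge p i j s).
Proof.
  pose proof T as (Hi & Hj & Hk & Hij & Hik & Hjk).
  intros Hdl s Hs.
  set (A := cell_value p f i j w i); set (B := cell_value p f i j w j);
    set (C := cell_value p f i j w k).
  assert (Ei : cell_value p f i j (w ++ [true]) i = (2 * A + 2 * B + C) / 5)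
    by now apply (cell_value_snoc p f i j k T H w true i k).
  assert (Ej : cell_value p f i j (w ++ [true]) j = B)
    by exact (cell_value_snoc_fixed p f i j w true).
  assert (Ek : cell_value p f i j (w ++ [true]) k = (2 * C + 2 * B + A) / 5)
    by now apply (cell_value_snoc p f i j k T H w true k i).
  pose proof (Rle_abs (dr w - dl w / 2)) as Hp; pose proof (Rle_abs (- (dr w - dl w / 2))) as Hn.
  rewrite Rabs_Ropp in Hn; unfold dl, dr, cell_dl, cell_dr in *; fold A B C in Hdl, Hp, Hn |- *.
  rewrite <- cell_value_l; fold A.
  apply (cell_lower_bound p f i j k _ (w ++ [true]) U Hc H T); rewrite ?Ei, ?Ej, ?Ek; try lra.
  rewrite dpos_snoc, dlen_snoc; simpl; lra.
Qed.

Lemma right_inf_cell_pos u : 0 < dl u -> right_inf (fun s => f (edge p i j s)) (dpos u) true.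
Proof.
  intros Hx M; set (L := dlen u); set (z0 := dr u - dl u / 2).
  assert (HL : 0 < L) by apply dlen_pos.
  destruct (growth_dominates (dl u) (Rabs z0) (15 * L * (Rabs M + 1)) Hx (Rabs_pos z0))
    as [N HN].
  exists (L * (/2) ^ N); split; [apply Rmult_lt_0_compat; [lra | apply pow_lt; lra]|].
  intros s _ Hs; set (w := s - dpos u) in *.
  destruct (dyadic_scale N (w / L)) as [n [HNn Hn]].
  { apply Rdiv_lt_0_compat; lra. }
  { apply Rmult_le_reg_r with L; [lra|]; unfold Rdiv; rewrite Rmult_assoc, Rinv_l; lra. }
  set (h := (/2) ^ n) in *; assert (Hh : 0 < h) by (apply pow_lt; lra).
  simpl in Hn; assert (Hw : L * h / 2 <= w <= L * h).
  { destruct Hn as [Hn1 Hn2]; split.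
    - apply Rmult_le_reg_r with (/ L); [apply Rinv_0_lt_compat; lra|].
      replace (L * h / 2 * / L) with (/ 2 * h) by (field; lra); exact Hn1.
    - apply Rmult_le_reg_r with (/ L); [apply Rinv_0_lt_compat; lra|].
      replace (L * h * / L) with h by (field; lra); exact Hn2. }
  (* s lies in the right half of the cell u 0^n, of length L h, where dl has become
     (3/5)^n dl u = (6/5)^n h dl u. *)
  pose proof (cell_d_app p f i j k T H u (repeat false n)) as Hpad.
  rewrite orbit_repeat_false in Hpad; injection Hpad as Hdl Hdr.
  assert (Hz : dr (u ++ repeat false n) - dl (u ++ repeat false n) / 2 = (1/5) ^ n * z0)
    by (unfold z0, dl, dr; rewrite Hdl, Hdr; field).
  assert (Hlow := cell_right_half_lower (u ++ repeat false n)).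
  unfold dl at 1 2 in Hlow; rewrite Hz, Hdl, dpos_pad, dlen_pad in Hlow; fold L h dl in Hlow.
  specialize (Hlow ltac:(apply Rmult_le_pos; [apply pow_le; lra | lra]) s
    ltac:(unfold w in Hw; lra)).
  assert (E35 : (3/5) ^ n = (6/5) ^ n * h)
    by (unfold h; rewrite <- Rpow_mult_distr; f_equal; field).
  assert (E15 : (1/5) ^ n = (2/5) ^ n * h)
    by (unfold h; rewrite <- Rpow_mult_distr; f_equal; field).
  rewrite E35, E15, Rabs_mult, (Rabs_pos_eq ((2/5) ^ n * h)) in Hlow
    by (apply Rmult_le_pos; [apply pow_le | ]; lra).
  specialize (HN n HNn).
  assert (Hgain : w * (Rabs M + 1) < f (edge p i j s) - f (edge p i j (dpos u))).
  { pose proof (Rabs_pos M); nra. }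
  simpl; apply Rlt_gt, Rmult_lt_reg_r with w; [lra|].
  unfold Rdiv; rewrite Rmult_assoc, Rinv_l by lra.
  pose proof (Rle_abs M); nra.
Qed.

End RightSlope.

Definition has_sign (up : bool) (x : R) : Prop := if up then 0 < x else x < 0.

Lemma has_sign_of_neq0 x : x <> 0 -> exists up, has_sign up x.
Proof. intros Hx; destruct (Rlt_dec 0 x); [exists true | exists false]; simpl; lra. Qed.

Lemma has_sign_opp up x : has_sign up x -> has_sign (negb up) (- x).
Proof. destruct up; simpl; lra. Qed.

Lemma right_inf_opp g t up : right_inf (fun s => - g s) t up -> right_inf g t (negb up).
Proof.
  intros Hr M; destruct (Hr (- M)) as [d [Hd Hs]]; exists d; split; auto.
  intros s Hs01 Hst; specialize (Hs s Hs01 Hst).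
  replace ((- g s - - g t) / (s - t)) with (- ((g s - g t) / (s - t))) in Hs by (field; lra).
  destruct up; simpl in *; lra.
Qed.

Lemma left_inf_reflect g h t up : (forall s, h s = g (1 - s)) ->
  right_inf h (1 - t) up -> left_inf g t (negb up).
Proof.
  intros Hgh Hr M; destruct (Hr (- M)) as [d [Hd Hs]]; exists d; split; auto.
  intros s Hs01 Hst; specialize (Hs (1 - s) ltac:(lra) ltac:(lra)).
  rewrite !Hgh in Hs; replace (1 - (1 - s)) with s in Hs by ring.
  replace (1 - (1 - t)) with t in Hs by ring; replace (1 - s - (1 - t)) with (t - s) in Hs by ring.
  replace ((g s - g t) / (t - s)) with (- ((g s - g t) / (s - t))) in Hs by (field; lra).
  destruct up; simpl in *; lra.
Qed.

Lemma infinite_deriv_of_sides g t up : right_inf g t up -> left_inf g t up -> infinite_deriv g t.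
Proof.
  intros Hr Hl; destruct up; [left | right]; intros M;
    destruct (Hr M) as [d1 [Hd1 H1]]; destruct (Hl M) as [d2 [Hd2 H2]];
    exists (Rmin d1 d2); (split; [now apply Rmin_pos|]);
    intros s Hs Hst; pose proof (Rmin_l d1 d2); pose proof (Rmin_r d1 d2);
    (destruct (Rlt_dec t s);
      [ apply H1; auto; rewrite Rabs_pos_eq in Hst; lra
      | apply H2; auto; rewrite Rabs_left1 in Hst; lra ]).
Qed.

Lemma left_inf_at_0 g up : left_inf g 0 up.
Proof. intros M; exists 1; split; [lra|]; intros s Hs Hst; lra. Qed.

Lemma right_inf_at_1 g up : right_inf g 1 up.
Proof. intros M; exists 1; split; [lra|]; intros s Hs Hst; lra. Qed.

Lemma harmonic_rule_opp p f : harmonic_rule p f -> harmonic_rule p (fun x => - f x).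
Proof. intros H w i j k Hw Hi Hj Hk Hij Hik Hjk; rewrite (H w i j k); auto; field. Qed.

Lemma continuous_on_K_opp p f : continuous_on_K p f -> continuous_on_K p (fun x => - f x).
Proof.
  intros Hc x Hx e He; destruct (Hc x Hx e He) as [d [Hd Hcd]]; exists d; split; auto.
  intros y Hy Hxy; rewrite <- Rabs_Ropp; replace (- (- f y - - f x)) with (f y - f x) by ring.
  auto.
Qed.

Lemma cell_dl_flip p f i j k u : cell_dl p f j i k (map negb u) = - cell_dr p f i j k u.
Proof. unfold cell_dl, cell_dr, cell_value; rewrite edge_word_flip; ring. Qed.

Section CellSlopes.
Variables (p : nat -> pt) (f : pt -> R) (i j k : nat).
Hypothesis U : unit_equilateral p.
Hypothesis Hc : continuous_on_K p f.
Hypothesis H : harmonic_rule p f.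
Hypothesis T : distinct3 i j k.

Lemma right_inf_cell u up : has_sign up (cell_dl p f i j k u) ->
  right_inf (fun s => f (edge p i j s)) (dpos u) up.
Proof.
  destruct up; simpl; intros Hs; [now apply right_inf_cell_pos with k|].
  apply (right_inf_opp _ _ true), (right_inf_cell_pos p (fun x => - f x) i j k); auto.
  - now apply continuous_on_K_opp.
  - now apply harmonic_rule_opp.
  - unfold cell_dl, cell_value in *; lra.
Qed.

End CellSlopes.

Section EdgeSlopes.
Variables (p : nat -> pt) (f : pt -> R) (i j k : nat).
Hypothesis U : unit_equilateral p.
Hypothesis Hc : continuous_on_K p f.
Hypothesis H : harmonic_rule p f.
Hypothesis T : distinct3 i j k.

Let g (s : R) : R := f (edge p i j s).

Lemma left_inf_cell u up : has_sign up (cell_dr p f i j k u) -> left_inf g (dpos u + dlen u) up.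
Proof.
  intros Hs; rewrite <- (Bool.negb_involutive up).
  apply left_inf_reflect with (h := fun s => f (edge p j i s)).
  - intros s; unfold g; rewrite <- (edge_rev p i j); f_equal; f_equal; ring.
  - replace (1 - (dpos u + dlen u)) with (dpos (map negb u)) by (rewrite dpos_flip; ring).
    apply (right_inf_cell p f j i k U Hc H (distinct3_swap i j k T)).
    rewrite cell_dl_flip; now apply has_sign_opp.
Qed.

Lemma infinite_deriv_at_0 : cell_dl p f i j k [] <> 0 -> infinite_deriv g 0.
Proof.
  intros Hx; destruct (has_sign_of_neq0 _ Hx) as [up Hup].
  apply (infinite_deriv_of_sides g 0 up); [exact (right_inf_cell p f i j k U Hc H T [] up Hup) |].
  apply left_inf_at_0.
Qed.

Lemma infinite_deriv_at_1 : cell_dr p f i j k [] <> 0 -> infinite_deriv g 1.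
Proof.
  intros Hy; destruct (has_sign_of_neq0 _ Hy) as [up Hup].
  apply (infinite_deriv_of_sides g 1 up); [apply right_inf_at_1|].
  pose proof (left_inf_cell [] up Hup) as Hl; simpl in Hl.
  now rewrite dlen_nil, Rplus_0_l in Hl.
Qed.

(* Both halves of the cell u see the same slope (x + y) / 5 at their common point. *)
Lemma infinite_deriv_at_dmid u : cell_dl p f i j k u + cell_dr p f i j k u <> 0 ->
  infinite_deriv g (dmid u).
Proof.
  intros Hs; destruct (has_sign_of_neq0 ((cell_dl p f i j k u + cell_dr p f i j k u) / 5))
    as [up Hup]; [lra|].
  pose proof (cell_d_snoc p f i j k T H u true) as Et; injection Et as Et _.
  pose proof (cell_d_snoc p f i j k T H u false) as Ef; injection Ef as _ Ef.
  apply (infinite_deriv_of_sides g _ up).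
  - replace (dmid u) with (dpos (u ++ [true])) by (rewrite dpos_snoc; unfold dmid; simpl; field).
    apply (right_inf_cell p f i j k U Hc H T); now rewrite Et.
  - replace (dmid u) with (dpos (u ++ [false]) + dlen (u ++ [false]))
      by (rewrite dpos_snoc, dlen_snoc; unfold dmid; simpl; field).
    apply left_inf_cell; now rewrite Ef.
Qed.

End EdgeSlopes.

Section EdgeJunctions.
Variables (p : nat -> pt) (i j k : nat).
Hypothesis U : unit_equilateral p.
Hypothesis T : distinct3 i j k.

Let ux := fst (p j) - fst (p i).
Let uy := snd (p j) - snd (p i).
Let det := ux * (snd (p k) - snd (p i)) - uy * (fst (p k) - fst (p i)).

(* The barycentric coordinate of x with respect to the vertex p_k. *)
Let coord (x : pt) : R := (ux * (snd x - snd (p i)) - uy * (fst x - fst (p i))) / det.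

Lemma det_neq0 : det <> 0.
Proof.
  pose proof T as (Hi & Hj & Hk & Hij & Hik & Hjk).
  pose proof (sq_dist_vertices p j i U Hj Hi ltac:(lia)) as E1.
  pose proof (sq_dist_vertices p k i U Hk Hi ltac:(lia)) as E2.
  pose proof (sq_dist_vertices p k j U Hk Hj ltac:(lia)) as E3.
  unfold det, ux, uy.
  set (a := fst (p j) - fst (p i)) in *; set (b := snd (p j) - snd (p i)) in *.
  set (c := fst (p k) - fst (p i)) in *; set (d := snd (p k) - snd (p i)) in *.
  assert (E3' : (c - a) ^ 2 + (d - b) ^ 2 = 1) by (rewrite <- E3; unfold a, b, c, d; ring).
  assert (Hdot : a * c + b * d = 1 / 2) by nra.
  assert (Hlag : (a * d - b * c) ^ 2 + (a * c + b * d) ^ 2 = (a ^ 2 + b ^ 2) * (c ^ 2 + d ^ 2))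
    by ring.
  rewrite E1, E2, Hdot in Hlag; intro Z; rewrite Z in Hlag; lra.
Qed.

Lemma coord_Fmap l x : coord (Fmap p l x) = (coord x + coord (p l)) / 2.
Proof. pose proof det_neq0; unfold coord, Fmap; simpl; clearbody ux uy det; field; auto. Qed.

Lemma coord_edge t : coord (edge p i j t) = 0.
Proof.
  pose proof det_neq0; unfold coord, edge; simpl; fold ux uy; clearbody ux uy det; field; auto.
Qed.

Lemma coord_vertex l : (l < 3)%nat ->
  (coord (p l) = 0 /\ (l = i \/ l = j)) \/ (coord (p l) = 1 /\ l = k).
Proof.
  pose proof T as (Hi & Hj & Hk & Hij & Hik & Hjk); pose proof det_neq0.
  intros Hl; assert (l = i \/ l = j \/ l = k) as [-> | [-> | ->]] by lia; unfold coord.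
  - left; split; auto; clearbody ux uy det; field; auto.
  - left; split; auto; fold ux uy; clearbody ux uy det; field; auto.
  - right; split; auto; fold det; clearbody ux uy det; field; auto.
Qed.

Lemma coord_Fw_nonneg w m : word w -> (m < 3)%nat -> 0 <= coord (Fw p w (p m)).
Proof.
  intros Hw Hm; induction w as [|l w IH]; simpl.
  - destruct (coord_vertex m Hm) as [[-> _] | [-> _]]; lra.
  - inversion Hw; subst; fold (Fw p w (p m)); rewrite coord_Fmap.
    destruct (coord_vertex l H1) as [[-> _] | [-> _]]; specialize (IH H2); lra.
Qed.

Lemma coord_Fw_eq0 w m : word w -> (m < 3)%nat -> coord (Fw p w (p m)) = 0 ->
  (exists u, w = edge_word i j u) /\ (m = i \/ m = j).
Proof.
  intros Hw Hm; induction w as [|l w IH]; simpl; intros Z.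
  - split; [now exists []|].
    destruct (coord_vertex m Hm) as [[_ Hmij] | [Hc _]]; auto; lra.
  - inversion Hw; subst; fold (Fw p w (p m)) in Z; rewrite coord_Fmap in Z.
    pose proof (coord_Fw_nonneg w m H2 Hm).
    destruct (coord_vertex l H1) as [[Hl0 Hlij] | [Hl1 _]]; [|lra].
    destruct (IH H2 ltac:(lra)) as [[u ->] Hmij]; split; auto.
    exists (Nat.eqb l j :: u); simpl; f_equal.
    destruct T as (_ & _ & _ & Hij & _).
    destruct Hlij as [-> | ->];
      [now rewrite (proj2 (Nat.eqb_neq i j) Hij) | now rewrite Nat.eqb_refl].
Qed.

Lemma junction_on_edge t : 0 <= t <= 1 -> junction p (edge p i j t) ->
  t = 0 \/ t = 1 \/ exists u, t = dmid u.
Proof.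
  pose proof T as (Hi & Hj & Hk & Hij & _).
  intros Ht [n [w [m [Hw [_ [Hm Hx]]]]]].
  pose proof (coord_edge t) as Hc; rewrite Hx in Hc.
  destruct (coord_Fw_eq0 w m Hw Hm Hc) as [[u ->] [-> | ->]].
  - rewrite Fw_edge_vertex_l in Hx; apply edge_inj in Hx; auto; subst t.
    destruct (dpos_dyadic u); auto.
  - rewrite Fw_edge_vertex_r in Hx; apply edge_inj in Hx; auto; subst t.
    destruct (dend_dyadic u); auto.
Qed.

End EdgeJunctions.

Definition vertex_lap (p : nat -> pt) (f : pt -> R) (m : nat) : R :=
  match m with
  | O => (f (p 1%nat) + f (p 2%nat)) / 2 - f (p 0%nat)
  | 1%nat => (f (p 0%nat) + f (p 2%nat)) / 2 - f (p 1%nat)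
  | _ => (f (p 0%nat) + f (p 1%nat)) / 2 - f (p 2%nat)
  end.

Lemma distinct3_third i j : (i < 3)%nat -> (j < 3)%nat -> i <> j -> distinct3 i j (3 - i - j).
Proof. unfold distinct3; lia. Qed.

Lemma cell_d_nil p f i j k : distinct3 i j k ->
  cell_dl p f i j k [] = vertex_lap p f i /\ cell_dr p f i j k [] = - vertex_lap p f j.
Proof.
  intros (Hi & Hj & Hk & Hij & Hik & Hjk); unfold cell_dl, cell_dr, cell_value, vertex_lap; simpl.
  destruct i as [|[|[|i]]]; destruct j as [|[|[|j]]]; destruct k as [|[|[|k]]]; try lia; split; lra.
Qed.

(* Every junction point of the contour where some restriction of f fails to have
   an infinite derivative is a vertex with vanishing Laplacian, or the midpoint of
   a cell whose two slopes (x + y) / 5 cancel. *)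
Definition exceptional (p : nat -> pt) (f : pt -> R) (x : pt) : Prop :=
  (exists m, (m < 3)%nat /\ x = p m /\ vertex_lap p f m = 0) \/
  (exists i j u, (i < 3 /\ j < 3 /\ i <> j)%nat /\ x = edge p i j (dmid u) /\
     orbit_sum (vertex_lap p f i, - vertex_lap p f j) u = 0).

Lemma exceptional_of_not_good p f x : unit_equilateral p -> harmonic p f -> junction p x ->
  ~ good_point p f x -> exceptional p f x.
Proof.
  intros U [Hc H] Jx Gx; apply NNPP; intros Ex; apply Gx.
  intros i j t Hi Hj Hij Ht ->.
  pose proof (distinct3_third i j Hi Hj Hij) as T; set (k := (3 - i - j)%nat) in T.
  destruct (cell_d_nil p f i j k T) as [Ei Ej].
  destruct (junction_on_edge p i j k U T t Ht Jx) as [-> | [-> | [u ->]]].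
  - apply (infinite_deriv_at_0 p f i j k U Hc H T); rewrite Ei; intros Z.
    apply Ex; left; exists i; repeat split; auto; now rewrite edge0.
  - apply (infinite_deriv_at_1 p f i j k U Hc H T); rewrite Ej; intros Z.
    apply Ex; left; exists j; repeat split; auto; [now rewrite edge1 | lra].
  - apply (infinite_deriv_at_dmid p f i j k U Hc H T); intros Z.
    apply Ex; right; exists i, j, u; repeat split; auto.
    pose proof (cell_d_app p f i j k T H [] u) as E; simpl in E.
    now rewrite Ei, Ej in E; unfold orbit_sum; rewrite <- E.
Qed.

Lemma in_cone_of_zero_product a b c : a + b + c = 0 -> ~ (a = 0 /\ b = 0 /\ c = 0) ->
  a * b * c = 0 -> in_cone (a, - b).
Proof.
  intros Hs Hnz Hp; unfold in_cone; simpl.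
  destruct (Rmult_integral _ _ Hp) as [Hab | Hc]; [destruct (Rmult_integral _ _ Hab) as [Ha | Hb]|].
  - subst; split; [lra | intro; apply Hnz; lra].
  - subst; split; [lra | intro; apply Hnz; lra].
  - assert (b = - a) by lra; subst; split; [nra | intro; apply Hnz; lra].
Qed.

Lemma in_cone_other_pairs a b c : a + b + c = 0 -> ~ (a = 0 /\ b = 0 /\ c = 0) ->
  ~ in_cone (a, - b) -> in_cone (a, - c) /\ in_cone (b, - c).
Proof.
  intros Hs Hnz Hab; unfold in_cone in *; simpl in *.
  assert (c = - a - b) by lra; subst c.
  assert (Hp : 0 < a * b) by (apply NNPP; intro; apply Hab; split; [nra | intro; apply Hnz; nra]).
  repeat split; nra.
Qed.

Section Exceptional.
Variables (p : nat -> pt) (f : pt -> R).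
Hypothesis Hnz : ~ (vertex_lap p f 0 = 0 /\ vertex_lap p f 1 = 0 /\ vertex_lap p f 2 = 0).

Let a := vertex_lap p f.

Lemma vertex_lap_sum3 i j k : distinct3 i j k -> a i + a j + a k = 0.
Proof.
  intros (Hi & Hj & Hk & Hij & Hik & Hjk); unfold a, vertex_lap.
  destruct i as [|[|[|i]]]; destruct j as [|[|[|j]]]; destruct k as [|[|[|k]]]; try lia; lra.
Qed.

Lemma vertex_lap_nonzero3 i j k : distinct3 i j k -> ~ (a i = 0 /\ a j = 0 /\ a k = 0).
Proof.
  intros (Hi & Hj & Hk & Hij & Hik & Hjk) Z; apply Hnz; unfold a in Z.
  destruct i as [|[|[|i]]]; destruct j as [|[|[|j]]]; destruct k as [|[|[|k]]]; try lia; tauto.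
Qed.

Lemma vertex_lap_pair_neq0 i j : (i < 3)%nat -> (j < 3)%nat -> i <> j -> (a i, - a j) <> (0, 0).
Proof.
  intros Hi Hj Hij E; injection E as Ei Ej.
  pose proof (distinct3_third i j Hi Hj Hij) as T.
  pose proof (vertex_lap_sum3 _ _ _ T); apply (vertex_lap_nonzero3 _ _ _ T); lra.
Qed.

Lemma vertex_lap_zero_unique m m' : (m < 3)%nat -> (m' < 3)%nat -> a m = 0 -> a m' = 0 -> m = m'.
Proof.
  intros Hm Hm' Z Z'; destruct (Nat.eq_dec m m') as [E | Hne]; auto; exfalso.
  pose proof (distinct3_third m m' Hm Hm' Hne) as T.
  pose proof (vertex_lap_sum3 _ _ _ T); apply (vertex_lap_nonzero3 _ _ _ T); lra.
Qed.

Lemma in_cone_of_vertex_lap_zero m i j : (m < 3)%nat -> (i < 3)%nat -> (j < 3)%nat -> i <> j ->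
  a m = 0 -> in_cone (a i, - a j).
Proof.
  intros Hm Hi Hj Hij Z; pose proof (distinct3_third i j Hi Hj Hij) as T.
  apply (in_cone_of_zero_product _ _ (a (3 - i - j)%nat)).
  - now apply vertex_lap_sum3.
  - now apply vertex_lap_nonzero3.
  - assert (m = i \/ m = j \/ m = (3 - i - j)%nat) as [-> | [-> | ->]] by lia; rewrite Z; ring.
Qed.

Lemma not_in_cone_pair_unique i j k i' j' : distinct3 i j k ->
  (i' < 3)%nat -> (j' < 3)%nat -> i' <> j' ->
  ~ in_cone (a i, - a j) -> ~ in_cone (a i', - a j') -> (i' = i /\ j' = j) \/ (i' = j /\ j' = i).
Proof.
  intros T Hi' Hj' Hij' Hc Hc'.
  destruct (in_cone_other_pairs _ _ (a k) (vertex_lap_sum3 _ _ _ T)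
    (vertex_lap_nonzero3 _ _ _ T) Hc) as [Hik Hjk].
  pose proof T as (Hi & Hj & Hk & Hij & Hik' & Hjk').
  assert (Hki : in_cone (a k, - a i))
    by (rewrite <- (Ropp_involutive (a k)); now apply (in_cone_swap_opp (a i) (- a k))).
  assert (Hkj : in_cone (a k, - a j))
    by (rewrite <- (Ropp_involutive (a k)); now apply (in_cone_swap_opp (a j) (- a k))).
  assert (Hijk : forall l, (l < 3)%nat -> l = i \/ l = j \/ l = k) by (intros l Hl; lia).
  destruct (Hijk i' Hi') as [-> | [-> | ->]]; destruct (Hijk j' Hj') as [-> | [-> | ->]];
    auto; exfalso; auto.
Qed.

Lemma exceptional_unique x y : unit_equilateral p ->
  exceptional p f x -> exceptional p f y -> x = y.
Proof.
  intros U [[m [Hm [-> Z]]] | [i [j [u [[Hi [Hj Hij]] [-> Su]]]]]]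
           [[m' [Hm' [-> Z']]] | [i' [j' [v [[Hi' [Hj' Hij']] [-> Sv]]]]]].
  - now rewrite (vertex_lap_zero_unique m m').
  - exfalso; apply (orbit_sum_eq0_not_in_cone _ _ Sv), (in_cone_of_vertex_lap_zero m); auto.
  - exfalso; apply (orbit_sum_eq0_not_in_cone _ _ Su), (in_cone_of_vertex_lap_zero m'); auto.
  - pose proof (vertex_lap_pair_neq0 i j Hi Hj Hij) as Hq.
    destruct (not_in_cone_pair_unique i j _ i' j' (distinct3_third i j Hi Hj Hij) Hi' Hj' Hij'
      (orbit_sum_eq0_not_in_cone _ _ Su) (orbit_sum_eq0_not_in_cone _ _ Sv)) as [[-> ->] | [-> ->]].
    + now rewrite (orbit_sum_eq0_unique u _ v Hq Su Sv).
    + assert (Sv' : orbit_sum (a i, - a j) (map negb v) = 0).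
      { rewrite <- (Ropp_involutive (a i)); unfold a; now rewrite orbit_sum_flip, Sv, Ropp_0. }
      rewrite (orbit_sum_eq0_unique u _ _ Hq Su Sv'), dmid_flip; apply edge_rev.
Qed.

End Exceptional.

Lemma vertex_values_const_Fw p f : harmonic_rule p f ->
  f (p 0%nat) = f (p 1%nat) -> f (p 1%nat) = f (p 2%nat) ->
  forall w m, word w -> (m < 3)%nat -> f (Fw p w (p m)) = f (p 0%nat).
Proof.
  intros H E01 E12 w; induction w as [|l w IH] using rev_ind; intros m Hw Hm.
  - destruct m as [|[|[|m]]]; simpl; try lia; lra.
  - apply Forall_app in Hw as [Hw Hl]; inversion Hl; subst.
    rewrite Fw_app; simpl.
    destruct (Nat.eq_dec m l) as [-> | Hml]; [now rewrite Fmap_fix, IH|].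
    change (Fmap p l (p m)) with (midpoint (p m) (p l)); rewrite Fw_midpoint.
    rewrite (H w m l (3 - m - l)%nat), !IH; auto; try lia; field.
Qed.

Lemma Fw_sub p w x y :
  fst (Fw p w x) - fst (Fw p w y) = (/2) ^ length w * (fst x - fst y) /\
  snd (Fw p w x) - snd (Fw p w y) = (/2) ^ length w * (snd x - snd y).
Proof.
  induction w as [|l w [IH1 IH2]]; simpl; [split; ring|].
  fold (Fw p w); unfold Fmap; simpl; split.
  - replace ((fst (Fw p w x) + fst (p l)) / 2 - (fst (Fw p w y) + fst (p l)) / 2)
      with ((fst (Fw p w x) - fst (Fw p w y)) / 2) by field; rewrite IH1; field.
  - replace ((snd (Fw p w x) + snd (p l)) / 2 - (snd (Fw p w y) + snd (p l)) / 2)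
      with ((snd (Fw p w x) - snd (Fw p w y)) / 2) by field; rewrite IH2; field.
Qed.

Lemma in_triangle_sq_dist_le p y : unit_equilateral p -> in_triangle p y ->
  (fst y - fst (p 0%nat)) ^ 2 + (snd y - snd (p 0%nat)) ^ 2 <= 1.
Proof.
  intros U [a [b [c [Ha [Hb [Hc [Hs ->]]]]]]]; cbn [fst snd].
  pose proof (sq_dist_vertices p 1 0 U ltac:(lia) ltac:(lia) ltac:(lia)) as E1.
  pose proof (sq_dist_vertices p 2 0 U ltac:(lia) ltac:(lia) ltac:(lia)) as E2.
  pose proof (sq_dist_vertices p 2 1 U ltac:(lia) ltac:(lia) ltac:(lia)) as E3.
  set (ux := fst (p 1%nat) - fst (p 0%nat)) in *; set (uy := snd (p 1%nat) - snd (p 0%nat)) in *.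
  set (vx := fst (p 2%nat) - fst (p 0%nat)) in *; set (vy := snd (p 2%nat) - snd (p 0%nat)) in *.
  assert (E3' : (vx - ux) ^ 2 + (vy - uy) ^ 2 = 1) by (rewrite <- E3; unfold ux, uy, vx, vy; ring).
  assert (Hdot : ux * vx + uy * vy = 1 / 2) by nra.
  replace a with (1 - b - c) by lra.
  replace ((1 - b - c) * fst (p 0%nat) + b * fst (p 1%nat) + c * fst (p 2%nat) - fst (p 0%nat))
    with (b * ux + c * vx) by (unfold ux, vx; ring).
  replace ((1 - b - c) * snd (p 0%nat) + b * snd (p 1%nat) + c * snd (p 2%nat) - snd (p 0%nat))
    with (b * uy + c * vy) by (unfold uy, vy; ring).
  replace ((b * ux + c * vx) ^ 2 + (b * uy + c * vy) ^ 2)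
    with (b ^ 2 * (ux ^ 2 + uy ^ 2) + c ^ 2 * (vx ^ 2 + vy ^ 2) + 2 * b * c * (ux * vx + uy * vy))
    by ring.
  rewrite E1, E2, Hdot; nra.
Qed.

Lemma K_near_junction p x d : unit_equilateral p -> K p x -> 0 < d ->
  exists w, word w /\ Defs.dist x (Fw p w (p 0%nat)) < d.
Proof.
  intros U Kx Hd; destruct (small_pow d Hd) as [n Hn].
  destruct (Kx n) as [w [y [Hw [Hl [Hy ->]]]]]; exists w; split; auto.
  unfold Defs.dist; destruct (Fw_sub p w y (p 0%nat)) as [-> ->]; rewrite Hl.
  pose proof (in_triangle_sq_dist_le p y U Hy) as Hy1.
  set (h := (/2) ^ n) in *; assert (0 < h) by (apply pow_lt; lra).
  set (S := (fst y - fst (p 0%nat)) ^ 2 + (snd y - snd (p 0%nat)) ^ 2) in Hy1.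
  assert (HS : 0 <= S) by (apply Rplus_le_le_0_compat; apply pow2_ge_0).
  replace ((h * (fst y - fst (p 0%nat))) ^ 2 + (h * (snd y - snd (p 0%nat))) ^ 2)
    with (h ^ 2 * S) by (unfold S; ring).
  rewrite <- (sqrt_pow2 d) by lra.
  apply sqrt_lt_1; [apply Rmult_le_pos; [apply pow2_ge_0 | lra] | apply pow2_ge_0 | nra].
Qed.

Lemma harmonic_const_of_vertex_lap p f : unit_equilateral p -> harmonic p f ->
  vertex_lap p f 0 = 0 -> vertex_lap p f 1 = 0 -> vertex_lap p f 2 = 0 ->
  forall x, K p x -> f x = f (p 0%nat).
Proof.
  intros U [Hc H] L0 L1 L2 x Kx; simpl in L0, L1, L2.
  apply NNPP; intros Hne.
  destruct (Hc x Kx (Rabs (f x - f (p 0%nat)))) as [d [Hd Hcd]]; [apply Rabs_pos_lt; lra|].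
  destruct (K_near_junction p x d U Kx Hd) as [w [Hw Hdist]].
  specialize (Hcd _ (K_Fw_vertex p w 0 Hw ltac:(lia)) Hdist).
  rewrite (vertex_values_const_Fw p f H ltac:(lra) ltac:(lra) w 0 Hw ltac:(lia)) in Hcd.
  rewrite Rabs_minus_sym in Hcd; lra.
Qed.

Lemma near_point_in_unit t d : 0 <= t <= 1 -> 0 < d ->
  exists s, 0 <= s <= 1 /\ 0 < Rabs (s - t) < d.
Proof.
  intros Ht Hd; destruct (Rlt_dec t 1).
  - exists (t + Rmin d (1 - t) / 2); pose proof (Rmin_l d (1 - t)); pose proof (Rmin_r d (1 - t)).
    assert (0 < Rmin d (1 - t)) by (apply Rmin_pos; lra); rewrite Rabs_pos_eq; lra.
  - exists (t - Rmin d t / 2); pose proof (Rmin_l d t); pose proof (Rmin_r d t).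
    assert (0 < Rmin d t) by (apply Rmin_pos; lra); rewrite Rabs_left; lra.
Qed.

Lemma zero_deriv_not_infinite g t : 0 <= t <= 1 -> zero_deriv g t -> ~ infinite_deriv g t.
Proof.
  intros Ht Z I; destruct (Z 1 ltac:(lra)) as [d1 [Hd1 H1]].
  destruct I as [I | I]; [destruct (I 1) as [d2 [Hd2 H2]] | destruct (I (-1)) as [d2 [Hd2 H2]]];
    destruct (near_point_in_unit t (Rmin d1 d2) Ht ltac:(now apply Rmin_pos)) as [s [Hs Hst]];
    pose proof (Rmin_l d1 d2); pose proof (Rmin_r d1 d2);
    specialize (H1 s Hs ltac:(lra)); specialize (H2 s Hs ltac:(lra));
    apply Rabs_def2 in H1; lra.
Qed.

Theorem lemma6 (p : nat -> pt) (f : pt -> R) :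
  unit_equilateral p ->
  harmonic p f ->
  (exists x y, K p x /\ K p y /\ f x <> f y) ->
  (forall t1 t2, 0 <= t1 <= 1 -> 0 <= t2 <= 1 ->
     junction p (edge p 1 2 t1) -> junction p (edge p 1 2 t2) ->
     ~ infinite_deriv (fun s => f (edge p 1 2 s)) t1 ->
     ~ infinite_deriv (fun s => f (edge p 1 2 s)) t2 ->
     t1 = t2) /\
  (forall x y, junction p x -> junction p y -> on_contour p x -> on_contour p y ->
     ~ good_point p f x -> ~ good_point p f y -> x = y) /\
  (forall x y, junction p x -> junction p y -> on_contour p x -> on_contour p y ->
     vanishing_point p f x -> vanishing_point p f y -> x = y).
Proof.
  intros U Hh [x0 [y0 [Kx0 [Ky0 Hxy0]]]].
  assert (Hnz : ~ (vertex_lap p f 0 = 0 /\ vertex_lap p f 1 = 0 /\ vertex_lap p f 2 = 0)).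
  { intros (L0 & L1 & L2); apply Hxy0.
    now rewrite (harmonic_const_of_vertex_lap p f U Hh L0 L1 L2 x0 Kx0),
      (harmonic_const_of_vertex_lap p f U Hh L0 L1 L2 y0 Ky0). }
  assert (Hbad : forall x y, junction p x -> junction p y ->
            ~ good_point p f x -> ~ good_point p f y -> x = y).
  { intros x y Jx Jy Gx Gy; apply (exceptional_unique p f Hnz x y U);
      now apply exceptional_of_not_good. }
  assert (Hvan : forall x, vanishing_point p f x -> ~ good_point p f x).
  { intros x (i & j & t & Hi & Hj & Hij & Ht & -> & Z) G.
    apply (zero_deriv_not_infinite _ t Ht Z); now apply G. }
  split; [|split]; auto.
  intros t1 t2 Ht1 Ht2 J1 J2 N1 N2; apply (edge_inj p 1 2); auto.
  apply Hbad; auto; intros G; [apply N1 | apply N2]; apply G; auto.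
Qed.
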